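(* Let $R\in\mathbb R$ and let $f:[0,R)\to\mathbb R$ be continuously differentiable and satisfy (h1) $f(0)>0$, $f'(0)=-1$; (h2) $f'$ is strictly increasing and convex; (h3) $f(t)<0$ for some $t\in(0,R)$. Let $t_*:=\min f^{-1}(\{0\})$, $\bar\tau:=\sup\{t\in[0,R):f(t)<0\}$, $\bar t:=\sup\{t\in[0,R):f'(t)<0\}$, and \[\kappa:=\sup_{0<t<R}\frac{-f(t)}{t},\qquad \lambda:=\sup\{t\in[0,R):\kappa+f'(t)<0\},\qquad\Theta:=\frac{\kappa}{2-\kappa}.\] Then $0<\kappa<1$, $0<\Theta<1$, $t_*<\lambda\le\bar t\le\bar\tau$, $f'(t)+\kappa<0$ for all $t\in[0,\lambda)$, and \[\inf_{0\le t<R}\big(f(t)+\kappa t\big)=\lim_{t\to\lambda^-}\big(f(t)+\kappa t\big)=0.\] *)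

From Stdlib Require Import Reals.
From Coquelicot Require Export Coquelicot.
Open Scope R_scope.

Definition C1_on_0R (f f' : R -> R) (Rad : R) : Prop :=
  (forall t, 0 < t < Rad -> is_derive f t (f' t)) /\
  filterlim (fun h => (f h - f 0) / h) (at_right 0) (locally (f' 0)) /\
  (forall t, 0 < t < Rad -> continuous f' t) /\
  filterlim f' (at_right 0) (locally (f' 0)).

Definition strictly_increasing_on_0R (g : R -> R) (Rad : R) : Prop :=
  forall x y, 0 <= x < Rad -> 0 <= y < Rad -> x < y -> g x < g y.

Definition convex_on_0R (g : R -> R) (Rad : R) : Prop :=
  forall x y a, 0 <= x < Rad -> 0 <= y < Rad -> 0 <= a <= 1 ->
    g (a * x + (1 - a) * y) <= a * g x + (1 - a) * g y.

Definition tau_bar (f : R -> R) (Rad : R) : Rbar :=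
  Lub_Rbar (fun t => 0 <= t < Rad /\ f t < 0).

Definition t_bar (f' : R -> R) (Rad : R) : Rbar :=
  Lub_Rbar (fun t => 0 <= t < Rad /\ f' t < 0).

Definition kappa (f : R -> R) (Rad : R) : Rbar :=
  Lub_Rbar (fun y => exists t, 0 < t < Rad /\ y = - f t / t).

Definition lambda (f f' : R -> R) (Rad : R) : Rbar :=
  Lub_Rbar (fun t => 0 <= t < Rad /\ real (kappa f Rad) + f' t < 0).

Definition Theta (f : R -> R) (Rad : R) : R :=
  real (kappa f Rad) / (2 - real (kappa f Rad)).

Definition inf_shifted (f : R -> R) (Rad : R) : Rbar :=
  Glb_Rbar (fun y => exists t, 0 <= t < Rad /\ y = f t + real (kappa f Rad) * t).

From Stdlib Require Import Reals Lra Classical.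
From Coquelicot Require Import Coquelicot.
Open Scope R_scope.

(* Since f' > -1 on (0, R), we have f t > f 0 - t, so -f t / t <= 1 - f 0 / R and
   kappa < 1, while (h3) gives kappa > 0.  By the definition of kappa the shifted
   function g t := f t + kappa t is nonnegative with infimum 0.  As f' is increasing,
   g' = f' + kappa is negative exactly on [0, lambda), so g decreases there; if
   lambda < R then g attains its minimum at lambda, hence g lambda = 0 and
   f lambda < 0, which puts the first root of f before lambda.  In all cases the
   decreasing g tends to its infimum 0 as t -> lambda-. *)

Lemma filterlim_lt_eventually {T} {F : (T -> Prop) -> Prop} {FF : Filter F}
  (h : T -> R) (L c : R) :
  filterlim h F (locally L) -> L < c -> F (fun y => h y < c).
Proof. intros Hh Hc. exact (Hh (fun y => y < c) (open_lt c L Hc)). Qed.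

Lemma filterlim_gt_eventually {T} {F : (T -> Prop) -> Prop} {FF : Filter F}
  (h : T -> R) (L c : R) :
  filterlim h F (locally L) -> c < L -> F (fun y => c < h y).
Proof. intros Hh Hc. exact (Hh (fun y => c < y) (open_gt c L Hc)). Qed.

Lemma continuous_at_right (h : R -> R) (x : R) :
  continuous h x -> filterlim h (at_right x) (locally (h x)).
Proof. apply filterlim_filter_le_1, filter_le_within. Qed.

Lemma continuous_at_left (h : R -> R) (x : R) :
  continuous h x -> filterlim h (at_left x) (locally (h x)).
Proof. apply filterlim_filter_le_1, filter_le_within. Qed.

Lemma right_derivative_at_right (h : R -> R) (a L : R) :
  filterlim (fun x => (h x - h a) / (x - a)) (at_right a) (locally L) ->
  filterlim h (at_right a) (locally (h a)).
Proof.
  intros Hq.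
  apply filterlim_ext_loc with
    (fun x => plus (h a) (mult (x - a) ((h x - h a) / (x - a)))).
  { exists posreal_one. intros y _ Hy. unfold plus, mult; simpl. field. lra. }
  replace (locally (h a)) with (locally (plus (h a) (mult 0 L)))
    by (f_equal; unfold plus, mult; simpl; ring).
  eapply filterlim_comp_2;
    [apply filterlim_const| |apply (@filterlim_plus R_AbsRing R_NormedModule)].
  eapply filterlim_comp_2; [|exact Hq|apply (@filterlim_mult R_AbsRing)].
  replace 0 with (a - a) by ring.
  apply continuous_at_right with (h := fun x => x - a).
  apply (@continuous_minus R_UniformSpace R_AbsRing R_NormedModule);
    [apply continuous_id|apply continuous_const].
Qed.

Lemma Lub_Rbar_finite (E : R -> Prop) (x B : R) :
  E x -> is_upper_bound E B ->
  Lub_Rbar E = Finite (real (Lub_Rbar E)) /\ is_lub E (real (Lub_Rbar E)).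
Proof.
  intros Ex HB. destruct (Lub_Rbar_correct E) as [Hub Hleast].
  assert (Hx := Hub x Ex). assert (HB' := Hleast B HB).
  revert Hub Hleast Hx HB'.
  destruct (Lub_Rbar E) as [l| |]; simpl; intros Hub Hleast Hx HB'; try contradiction.
  split; [reflexivity|]. split.
  - intros y Ey. exact (Hub y Ey).
  - intros b Hb. exact (Hleast b Hb).
Qed.

Lemma Glb_Rbar_real_is_glb (E : R -> Prop) (x B : R) :
  E x -> (forall y, E y -> B <= y) ->
  (forall y, E y -> real (Glb_Rbar E) <= y) /\
  (forall b, (forall y, E y -> b <= y) -> b <= real (Glb_Rbar E)).
Proof.
  intros Ex HB. destruct (Glb_Rbar_correct E) as [Hlb Hgreatest].
  assert (Hx := Hlb x Ex). assert (HB' := Hgreatest B HB).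
  revert Hlb Hgreatest Hx HB'.
  destruct (Glb_Rbar E) as [m| |]; simpl; intros Hlb Hgreatest Hx HB'; try contradiction.
  split.
  - intros y Ey. exact (Hlb y Ey).
  - intros b Hb. exact (Hgreatest b Hb).
Qed.

Lemma lub_approx (E : R -> Prop) (l e : R) :
  is_lub E l -> 0 < e -> exists y, E y /\ l - e < y.
Proof.
  intros [_ Hleast] He. apply NNPP. intros Hnone.
  enough (l <= l - e) by lra.
  apply Hleast. intros y Ey. apply Rnot_lt_le. intros Hy. apply Hnone. eauto.
Qed.

Lemma Lub_Rbar_le_dominated (E E' : R -> Prop) :
  (forall x, E x -> exists y, E' y /\ x <= y) -> Rbar_le (Lub_Rbar E) (Lub_Rbar E').
Proof.
  intros Hdom. apply (proj2 (Lub_Rbar_correct E)). intros x Ex.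
  destruct (Hdom x Ex) as [y [E'y Hxy]].
  apply Rbar_le_trans with (Finite y); [exact Hxy|].
  exact (proj1 (Lub_Rbar_correct E') y E'y).
Qed.

Lemma continuous_extension (h : R -> R) (a b : R) :
  a < b -> (forall c, a < c < b -> continuous h c) ->
  filterlim h (at_right a) (locally (h a)) -> filterlim h (at_left b) (locally (h b)) ->
  exists g : R -> R, (forall c, continuous g c) /\ (forall c, a <= c <= b -> g c = h c).
Proof.
  intros Hab Hin Ha Hb.
  destruct (C0_extension_lt h (h a) (h b) a b Hab Hin Ha Hb) as [g [Hg [Hgh [Hga Hgb]]]].
  exists g. split; [exact Hg|]. intros c [Hac Hcb].
  destruct (Rle_lt_or_eq_dec a c Hac) as [Hac' | <-]; [|exact Hga].
  destruct (Rle_lt_or_eq_dec c b Hcb) as [Hcb' | ->]; [|exact Hgb].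
  apply Hgh. lra.
Qed.

Lemma MVT_one_sided (h h' : R -> R) (a b : R) :
  a < b -> (forall x, a < x < b -> is_derive h x (h' x)) ->
  filterlim h (at_right a) (locally (h a)) -> filterlim h (at_left b) (locally (h b)) ->
  exists c, a < c < b /\ h b - h a = h' c * (b - a).
Proof.
  intros Hab Hd Ha Hb.
  assert (Hcont : forall c, a < c < b -> continuous h c)
    by (intros c Hc; apply (@ex_derive_continuous R_AbsRing R_NormedModule);
        exists (h' c); apply Hd, Hc).
  destruct (continuous_extension h a b Hab Hcont Ha Hb) as [g [Hg Hgh]].
  assert (Hgd : forall x, a < x < b -> is_derive g x (h' x)).
  { intros x Hx. apply is_derive_ext_loc with h; [|apply Hd, Hx].
    apply filter_imp with (fun y => a < y /\ y < b).
    - intros y Hy. symmetry. apply Hgh. lra.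
    - exact (open_and _ _ (open_gt a) (open_lt b) x Hx). }
  assert (pr : forall c, a < c < b -> derivable_pt g c)
    by (intros c Hc; exists (h' c); apply is_derive_Reals, Hgd, Hc).
  destruct (MVT g id a b pr (fun c _ => derivable_pt_id c) Hab
              (fun c _ => proj2 (continuity_pt_filterlim g c) (Hg c))
              (fun c _ => continuity_pt_id c)) as [c [Hc Heq]].
  exists c. split; [exact Hc|].
  rewrite (derive_pt_eq_0 _ _ _ _ (proj1 (is_derive_Reals _ _ _) (Hgd c Hc))),
    derive_pt_id in Heq.
  rewrite <- (Hgh a), <- (Hgh b) by lra. unfold id in Heq. lra.
Qed.

Lemma IVT_one_sided (h : R -> R) (a b : R) :
  a < b -> (forall c, a < c < b -> continuous h c) ->
  filterlim h (at_right a) (locally (h a)) -> filterlim h (at_left b) (locally (h b)) ->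
  h b < 0 < h a -> exists z, a < z < b /\ h z = 0.
Proof.
  intros Hab Hcont Ha Hb Hsign.
  destruct (continuous_extension h a b Hab Hcont Ha Hb) as [g [Hg Hgh]].
  assert (Hga : g a = h a) by (apply Hgh; lra).
  assert (Hgb : g b = h b) by (apply Hgh; lra).
  destruct (IVT_gen_consistent g a b 0 Hg) as [z [Hz Hgz]].
  { rewrite Rmin_right, Rmax_left; lra. }
  rewrite Rmin_left, Rmax_right in Hz by lra.
  assert (Hhz : h z = 0) by (rewrite <- Hgh; assumption).
  exists z. split; [|exact Hhz].
  destruct Hz as [Haz Hzb].
  split; apply Rnot_le_lt; intros Hle.
  - assert (z = a) by lra. subst. lra.
  - assert (z = b) by lra. subst. lra.
Qed.

Section MajorantFunction.

Variables (Rad : R) (f f' : R -> R).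
Hypothesis f_derive : forall t, 0 < t < Rad -> is_derive f t (f' t).
Hypothesis f_right_derive0 : filterlim (fun h => (f h - f 0) / h) (at_right 0) (locally (f' 0)).
Hypothesis f'_continuous : forall t, 0 < t < Rad -> continuous f' t.
Hypothesis f'_at_right0 : filterlim f' (at_right 0) (locally (f' 0)).
Hypothesis f0_pos : f 0 > 0.
Hypothesis f'0 : f' 0 = -1.
Hypothesis f'_increasing : strictly_increasing_on_0R f' Rad.
Variable t0 : R.
Hypothesis t0_range : 0 < t0 < Rad.
Hypothesis f_t0_neg : f t0 < 0.

Lemma f_continuous t : 0 < t < Rad -> continuous f t.
Proof.
  intros Ht. apply (@ex_derive_continuous R_AbsRing R_NormedModule).
  exists (f' t). apply f_derive, Ht.
Qed.

Lemma f_at_right t : 0 <= t < Rad -> filterlim f (at_right t) (locally (f t)).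
Proof.
  intros [Ht HtR]. destruct (Rle_lt_or_eq_dec 0 t Ht) as [Ht0 | <-].
  - apply continuous_at_right, f_continuous. lra.
  - apply right_derivative_at_right with (f' 0).
    apply filterlim_ext with (fun h => (f h - f 0) / h); [|exact f_right_derive0].
    intros h. now rewrite Rminus_0_r.
Qed.

Lemma f'_at_right t : 0 <= t < Rad -> filterlim f' (at_right t) (locally (f' t)).
Proof.
  intros [Ht HtR]. destruct (Rle_lt_or_eq_dec 0 t Ht) as [Ht0 | <-].
  - apply continuous_at_right, f'_continuous. lra.
  - exact f'_at_right0.
Qed.

Lemma f_MVT a b : 0 <= a -> a < b -> b < Rad ->
  exists c, a < c < b /\ f b - f a = f' c * (b - a).
Proof.
  intros Ha Hab Hb. apply MVT_one_sided; [exact Hab | | | ].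
  - intros x Hx. apply f_derive. lra.
  - apply f_at_right. lra.
  - apply continuous_at_left, f_continuous. lra.
Qed.

Lemma f_root_before u : 0 < u < Rad -> f u < 0 -> exists z, 0 < z < u /\ f z = 0.
Proof.
  intros Hu Hfu. apply IVT_one_sided; [lra | | | | lra].
  - intros c Hc. apply f_continuous. lra.
  - apply f_at_right. lra.
  - apply continuous_at_left, f_continuous. lra.
Qed.

Lemma f_ge_tangent0 t : 0 < t < Rad -> f 0 - t < f t.
Proof.
  intros Ht. destruct (f_MVT 0 t) as [c [Hc Heq]]; try lra.
  assert (f' 0 < f' c) by (apply f'_increasing; lra). nra.
Qed.

Lemma neg_slope_le t : 0 < t < Rad -> - f t / t <= 1 - f 0 / Rad.
Proof.
  intros Ht.
  assert (f 0 / Rad <= f 0 / t)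
    by (apply Rmult_le_compat_l; [lra|apply Rinv_le_contravar; lra]).
  assert (- f t / t < 1 - f 0 / t); [|lra].
  apply (Rmult_lt_reg_r t); [lra|].
  replace (- f t / t * t) with (- f t) by (field; lra).
  replace ((1 - f 0 / t) * t) with (t - f 0) by (field; lra).
  pose proof (f_ge_tangent0 t Ht). lra.
Qed.

Local Notation kap := (real (kappa f Rad)).

Let slopes := fun y => exists t, 0 < t < Rad /\ y = - f t / t.

Lemma slopes_bounded : is_upper_bound slopes (1 - f 0 / Rad).
Proof. intros y [t [Ht ->]]. now apply neg_slope_le. Qed.

Lemma kappa_finite : kappa f Rad = Finite kap.
Proof.
  exact (proj1 (Lub_Rbar_finite slopes (- f t0 / t0) _ ltac:(now exists t0) slopes_bounded)).
Qed.

Lemma kappa_is_lub : is_lub slopes kap.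
Proof.
  exact (proj2 (Lub_Rbar_finite slopes (- f t0 / t0) _ ltac:(now exists t0) slopes_bounded)).
Qed.

Lemma kappa_bounds : 0 < kap < 1.
Proof.
  destruct kappa_is_lub as [Hub Hleast]. split.
  - apply Rlt_le_trans with (- f t0 / t0).
    + apply Rdiv_lt_0_compat; lra.
    + apply Hub. now exists t0.
  - apply Rle_lt_trans with (1 - f 0 / Rad).
    + apply Hleast, slopes_bounded.
    + assert (0 < f 0 / Rad) by (apply Rdiv_lt_0_compat; lra). lra.
Qed.

Lemma shifted_nonneg t : 0 <= t < Rad -> 0 <= f t + kap * t.
Proof.
  intros [Ht HtR]. destruct (Rle_lt_or_eq_dec 0 t Ht) as [Ht0 | <-]; [|lra].
  assert (Hle : - f t / t <= kap)
    by (apply (proj1 kappa_is_lub); now exists t).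
  apply Rmult_le_compat_r with (r := t) in Hle; [|lra].
  replace (- f t / t * t) with (- f t) in Hle by (field; lra). lra.
Qed.

Lemma shifted_approx0 e : 0 < e -> exists s, 0 < s < Rad /\ f s + kap * s < e.
Proof.
  intros He.
  destruct (lub_approx slopes kap (e / Rad) kappa_is_lub) as [y [[s [Hs ->]] Hy]].
  { apply Rdiv_lt_0_compat; lra. }
  exists s. split; [exact Hs|].
  apply Rmult_lt_compat_r with (r := s) in Hy; [|lra].
  replace (- f s / s * s) with (- f s) in Hy by (field; lra).
  assert (e / Rad * s < e).
  { apply (Rmult_lt_reg_r Rad); [lra|].
    replace (e / Rad * s * Rad) with (e * s) by (field; lra). nra. }
  nra.
Qed.

Lemma inf_shifted_eq0 : inf_shifted f Rad = Finite 0.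
Proof.
  apply is_glb_Rbar_unique. split.
  - intros y [t [Ht ->]]. apply shifted_nonneg, Ht.
  - intros [b| |] Hb; simpl; [| |exact I].
    + apply Rnot_lt_le. intros Hbpos.
      destruct (shifted_approx0 b Hbpos) as [s [Hs Hsb]].
      assert (Hle : Rbar_le b (f s + kap * s))
        by (apply Hb; exists s; split; [lra|reflexivity]).
      simpl in Hle. lra.
    + apply (Hb (f 0 + kap * 0)). exists 0. split; [lra|reflexivity].
Qed.

Local Notation lam := (real (lambda f f' Rad)).

Let descent := fun t => 0 <= t < Rad /\ kap + f' t < 0.

Lemma descent_0 : descent 0.
Proof. split; [lra|]. rewrite f'0. pose proof kappa_bounds. lra. Qed.

Lemma descent_bounded : is_upper_bound descent Rad.
Proof. intros t [Ht _]. lra. Qed.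

Lemma lambda_finite : lambda f f' Rad = Finite lam.
Proof. exact (proj1 (Lub_Rbar_finite descent 0 Rad descent_0 descent_bounded)). Qed.

Lemma lambda_is_lub : is_lub descent lam.
Proof. exact (proj2 (Lub_Rbar_finite descent 0 Rad descent_0 descent_bounded)). Qed.

Lemma lambda_bounds : 0 <= lam <= Rad.
Proof.
  destruct lambda_is_lub as [Hub Hleast].
  split; [apply Hub, descent_0 | apply Hleast, descent_bounded].
Qed.

Lemma descent_below_lambda t : 0 <= t -> t < lam -> kap + f' t < 0.
Proof.
  intros Ht Htl. apply NNPP. intros Hn.
  assert (Hub : is_upper_bound descent t).
  { intros y [Hy Hy']. apply Rnot_lt_le. intros Hty. apply Hn.
    assert (f' t < f' y) by (apply f'_increasing; lra). lra. }
  pose proof (proj2 lambda_is_lub t Hub). lra.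
Qed.

Lemma descent_extends x : 0 <= x < Rad -> kap + f' x < 0 ->
  exists y, x < y < Rad /\ kap + f' y < 0.
Proof.
  intros Hx Hdx.
  assert (Hev : at_right x (fun y => (x < y /\ y < Rad) /\ f' y < - kap)).
  { apply filter_and; [apply filter_and|].
    - exists posreal_one. intros y _ Hy. exact Hy.
    - exact (filter_le_within _ _ (open_lt Rad x (proj2 Hx))).
    - apply filterlim_lt_eventually with (f' x); [apply f'_at_right, Hx|lra]. }
  destruct (filter_ex _ Hev) as [y [Hy Hfy]]. exists y. split; [exact Hy|lra].
Qed.

Lemma descent_stops_at_lambda : lam < Rad -> 0 <= kap + f' lam.
Proof.
  intros HlR. apply Rnot_lt_le. intros Hneg.
  pose proof lambda_bounds.
  destruct (descent_extends lam) as [y [Hy Hdy]]; [lra|exact Hneg|].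
  assert (y <= lam) by (apply (proj1 lambda_is_lub); split; [lra|exact Hdy]).
  lra.
Qed.

Lemma shifted_decreasing s t : 0 <= s -> s < t -> t <= lam -> t < Rad ->
  f t + kap * t < f s + kap * s.
Proof.
  intros Hs Hst Htl HtR.
  destruct (f_MVT s t) as [c [Hc Heq]]; try lra.
  assert (kap + f' c < 0) by (apply descent_below_lambda; lra). nra.
Qed.

Lemma shifted_min_at_lambda s : lam < Rad -> 0 <= s < Rad ->
  f lam + kap * lam <= f s + kap * s.
Proof.
  intros HlR Hs. pose proof lambda_bounds.
  destruct (Rtotal_order s lam) as [Hsl | [-> | Hls]].
  - apply Rlt_le, shifted_decreasing; lra.
  - lra.
  - destruct (f_MVT lam s) as [c [Hc Heq]]; try lra.
    assert (f' lam < f' c) by (apply f'_increasing; lra).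
    pose proof descent_stops_at_lambda HlR. nra.
Qed.

Lemma shifted_zero_at_lambda : lam < Rad -> 0 < lam /\ f lam + kap * lam = 0.
Proof.
  intros HlR. pose proof lambda_bounds as [Hl0 _].
  assert (Hzero : f lam + kap * lam = 0).
  { apply Rle_antisym; [|apply shifted_nonneg; lra].
    apply Rnot_lt_le. intros Hpos.
    destruct (shifted_approx0 _ Hpos) as [s [Hs Hsmall]].
    pose proof (shifted_min_at_lambda s HlR ltac:(lra)). lra. }
  split; [|exact Hzero].
  destruct (Rle_lt_or_eq_dec 0 lam Hl0) as [Hpos | Hzero0]; [exact Hpos|].
  rewrite <- Hzero0 in Hzero. lra.
Qed.

Lemma shifted_approx_below_lambda e : 0 < e ->
  exists s, 0 <= s < lam /\ f s + kap * s < e.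
Proof.
  intros He. pose proof lambda_bounds.
  destruct (shifted_approx0 e He) as [s [Hs Hse]].
  destruct (Rlt_le_dec s lam) as [Hsl | Hls]; [exists s; split; [lra|exact Hse]|].
  destruct (shifted_zero_at_lambda ltac:(lra)) as [Hl0 Hzero].
  assert (Hcont : continuous (fun t => f t + kap * t) lam).
  { apply (@ex_derive_continuous R_AbsRing R_NormedModule).
    auto_derive. exists (f' lam). apply f_derive. lra. }
  assert (Hev : at_left lam (fun t => (0 < t /\ t < lam) /\ f t + kap * t < e)).
  { apply filter_and; [apply filter_and|].
    - exact (filter_le_within _ _ (open_gt 0 lam Hl0)).
    - exists posreal_one. intros y _ Hy. exact Hy.
    - apply filterlim_lt_eventually with (f lam + kap * lam);
        [exact (continuous_at_left (fun t => f t + kap * t) lam Hcont)|lra]. }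
  destruct (filter_ex _ Hev) as [t [Ht Hte]]. exists t. split; [lra|exact Hte].
Qed.

Lemma shifted_lim_lambda :
  filterlim (fun t => f t + kap * t) (at_left lam) (locally 0).
Proof.
  pose proof lambda_bounds.
  apply (filterlim_locally (fun t => f t + kap * t) 0). intros eps.
  destruct (shifted_approx_below_lambda eps (cond_pos eps)) as [s [Hs Hse]].
  exists (mkposreal (lam - s) ltac:(lra)). intros t Ht Htl.
  change (Rabs (t - lam) < lam - s) in Ht. apply Rabs_def2 in Ht.
  change (Rabs (f t + kap * t - 0) < eps).
  rewrite Rminus_0_r, Rabs_right by (apply Rle_ge, shifted_nonneg; lra).
  apply Rlt_trans with (f s + kap * s); [|exact Hse].
  apply shifted_decreasing; lra.
Qed.

Lemma neg_point_below_lambda : exists u, 0 < u < Rad /\ f u < 0 /\ u <= lam.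
Proof.
  pose proof lambda_bounds as [_ HlR']. pose proof kappa_bounds.
  destruct (Rle_lt_or_eq_dec lam Rad HlR') as [HlR | HlR].
  - destruct (shifted_zero_at_lambda HlR) as [Hl0 Hzero].
    exists lam. split; [lra|]. split; [nra|lra].
  - exists t0. split; [exact t0_range|]. split; [exact f_t0_neg|lra].
Qed.

Lemma first_root_before_lambda : exists ts,
  (0 <= ts < Rad /\ f ts = 0 /\ (forall t, 0 <= t < Rad -> f t = 0 -> ts <= t)) /\ ts < lam.
Proof.
  set (roots := fun t => 0 <= t < Rad /\ f t = 0).
  destruct neg_point_below_lambda as [u [Hu [Hfu Hul]]].
  destruct (f_root_before u Hu Hfu) as [z [Hz Hfz]].
  destruct (Glb_Rbar_real_is_glb roots z 0) as [Hlb Hgreatest];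
    [split; [lra|exact Hfz] | intros y [Hy _]; lra |].
  set (ts := real (Glb_Rbar roots)) in *.
  assert (Hts0 : 0 <= ts) by (apply Hgreatest; intros y [Hy _]; lra).
  assert (Htsz : ts <= z) by (apply Hlb; split; [lra|exact Hfz]).
  exists ts. split; [|lra].
  split; [lra|]. split; [|intros t Ht Hft; apply Hlb; split; assumption].
  destruct (Rtotal_order (f ts) 0) as [Hneg | [Hroot | Hpos]]; [exfalso| exact Hroot |exfalso].
  - assert (Hts : 0 < ts) by (destruct (Rle_lt_or_eq_dec 0 ts Hts0) as [? | <-]; lra).
    destruct (f_root_before ts ltac:(lra) Hneg) as [w [Hw Hfw]].
    assert (ts <= w) by (apply Hlb; split; [lra|exact Hfw]). lra.
  - (* f > 0 on [ts, ts + d), so ts + d is still a lower bound of the roots *)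
    assert (Hev : at_right ts (fun t => 0 < f t)).
    { apply filterlim_gt_eventually with (f ts); [apply f_at_right; lra|exact Hpos]. }
    destruct Hev as [d Hd].
    assert (Hbound : ts + d <= ts); [|pose proof (cond_pos d); lra].
    apply Hgreatest. intros y [Hy Hfy]. apply Rnot_lt_le. intros Hyd.
    assert (Htsy : ts <= y) by (apply Hlb; split; assumption).
    destruct (Rle_lt_or_eq_dec ts y Htsy) as [Hlt | <-]; [|lra].
    assert (0 < f y); [|lra].
    apply Hd; [|exact Hlt]. change (Rabs (y - ts) < d). apply Rabs_def1; lra.
Qed.

Lemma lambda_le_t_bar : Rbar_le (lambda f f' Rad) (t_bar f' Rad).
Proof.
  pose proof kappa_bounds.
  apply Lub_Rbar_le_dominated. intros t [Ht Hdt]. exists t. repeat split; lra.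
Qed.

Lemma t_bar_le_tau_bar : Rbar_le (t_bar f' Rad) (tau_bar f Rad).
Proof.
  apply Lub_Rbar_le_dominated. intros t [Ht Hf't].
  destruct (Rle_lt_dec t t0) as [Htt0 | Ht0t].
  - exists t0. repeat split; lra.
  - exists t. split; [|lra]. split; [exact Ht|].
    destruct (f_MVT t0 t) as [c [Hc Heq]]; try lra.
    assert (f' c < f' t) by (apply f'_increasing; lra). nra.
Qed.

End MajorantFunction.

Theorem proposition2p4 (Rad : R) (f f' : R -> R) :
  C1_on_0R f f' Rad ->
  (* (h1) *) f 0 > 0 -> f' 0 = -1 ->
  (* (h2) *) strictly_increasing_on_0R f' Rad -> convex_on_0R f' Rad ->
  (* (h3) *) (exists t, 0 < t < Rad /\ f t < 0) ->
  Rbar_lt (Finite 0) (kappa f Rad) /\ Rbar_lt (kappa f Rad) (Finite 1) /\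
  0 < Theta f Rad < 1 /\
  (exists tstar,
      (0 <= tstar < Rad /\ f tstar = 0 /\
       (forall t, 0 <= t < Rad -> f t = 0 -> tstar <= t)) /\
      Rbar_lt (Finite tstar) (lambda f f' Rad)) /\
  Rbar_le (lambda f f' Rad) (t_bar f' Rad) /\
  Rbar_le (t_bar f' Rad) (tau_bar f Rad) /\
  (forall t, 0 <= t -> Rbar_lt (Finite t) (lambda f f' Rad) ->
      f' t + real (kappa f Rad) < 0) /\
  inf_shifted f Rad = Finite 0 /\
  filterlim (fun t => f t + real (kappa f Rad) * t)
            (at_left (real (lambda f f' Rad))) (locally 0).
Proof.
  intros [Hd [Hd0 [Hc' Hc'0]]] Hf0 Hf'0 Hinc _ [t0 [Ht0 Hft0]].
  assert (Hkap : kappa f Rad = Finite (real (kappa f Rad)))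
    by (eapply kappa_finite; eassumption).
  assert (Hk : 0 < real (kappa f Rad) < 1) by (eapply kappa_bounds; eassumption).
  assert (Hlam : lambda f f' Rad = Finite (real (lambda f f' Rad)))
    by (eapply lambda_finite; eassumption).
  split; [rewrite Hkap; simpl; lra|].
  split; [rewrite Hkap; simpl; lra|].
  split; [unfold Theta; split; [apply Rdiv_lt_0_compat | apply Rlt_div_l]; lra|].
  split.
  { edestruct first_root_before_lambda as [ts [Hts Htsl]]; try eassumption.
    exists ts. rewrite Hlam. exact (conj Hts Htsl). }
  split; [eapply lambda_le_t_bar; eassumption|].
  split; [eapply t_bar_le_tau_bar; eassumption|].
  split.
  { intros t Ht Htl. rewrite Hlam in Htl. rewrite Rplus_comm.
    eapply descent_below_lambda; eassumption. }
  split; [eapply inf_shifted_eq0; eassumption|].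
  eapply shifted_lim_lambda; eassumption.
Qed.
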